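(* Let $D$ be a non-commutative division ring with center $F$, let $M$ be an irreducible metabelian locally solvable maximal subgroup of $D^*$, and let $A$ be a maximal abelian normal subgroup of $M$. If $N$ is a subgroup of $M$ with $A\subsetneq N$, then $N$ is irreducible.
   Context: $D^*$ is the multiplicative group of $D$; maximal subgroup = proper subgroup maximal among proper subgroups. A subgroup $G\le D^*$ is irreducible if the division subring $F(G)$ generated by $F\cup G$ equals $D$. Locally solvable: every finitely generated subgroup solvable. Metabelian: the derived subgroup is abelian. A maximal abelian normal subgroup is an abelian normal subgroup not properly contained in another abelian normal subgroup. *)

(* A division ring D is a unitRingType in which every nonzero
   element is a unit. Subsets/subgroups of D are predicates D -> Prop. *)
From HB Require Import structures.
From mathcomp Require Import all_boot all_algebra.
Set Implicit Arguments. Unset Strict Implicit. Unset Printing Implicit Defensive.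
Import GRing.Theory.
Local Open Scope ring_scope.

Section DivRingGroups.
Variable R : unitRingType.

Definition is_divring : Prop := forall x : R, x != 0 -> x \is a GRing.unit.

Definition subset_pr (A B : R -> Prop) : Prop := forall x, A x -> B x.
Definition seteq_pr (A B : R -> Prop) : Prop := forall x, A x <-> B x.

Definition units_set : R -> Prop := fun x => x \is a GRing.unit.

Definition is_subgroup (G : R -> Prop) : Prop :=
  [/\ subset_pr G units_set, G 1,
      (forall x y, G x -> G y -> G (x * y)) &
      (forall x, G x -> G x^-1)].

Definition center : R -> Prop := fun x => forall y, x * y = y * x.

Definition is_divsubring (S : R -> Prop) : Prop :=
  [/\ S 0, S 1, (forall x y, S x -> S y -> S (x - y)),
      (forall x y, S x -> S y -> S (x * y)) &
      (forall x, S x -> x != 0 -> S x^-1)].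

Definition divsubring_gen (S : R -> Prop) : R -> Prop :=
  fun x => forall T, is_divsubring T -> subset_pr S T -> T x.

(* G is irreducible: F(G) = D *)
Definition irreducible (G : R -> Prop) : Prop :=
  forall x, divsubring_gen (fun y => center y \/ G y) x.

Definition gen_subgroup (S : R -> Prop) : R -> Prop :=
  fun x => forall H, is_subgroup H -> subset_pr S H -> H x.

Definition commutator (x y : R) : R := x^-1 * y^-1 * x * y.

Definition derived (G : R -> Prop) : R -> Prop :=
  gen_subgroup (fun z => exists x y, [/\ G x, G y & z = commutator x y]).

Fixpoint derived_iter (n : nat) (G : R -> Prop) : R -> Prop :=
  if n is n'.+1 then derived (derived_iter n' G) else G.

Definition solvable_grp (G : R -> Prop) : Prop :=
  exists n, forall x, derived_iter n G x -> x = 1.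

Definition locally_solvable (G : R -> Prop) : Prop :=
  forall s : seq R, (forall x, x \in s -> G x) ->
    solvable_grp (gen_subgroup (fun x => x \in s)).

Definition abelian_set (G : R -> Prop) : Prop :=
  forall x y, G x -> G y -> x * y = y * x.

Definition metabelian (G : R -> Prop) : Prop := abelian_set (derived G).

Definition normal_sub (H G : R -> Prop) : Prop :=
  [/\ is_subgroup H, subset_pr H G &
      forall g h, G g -> H h -> H (g^-1 * h * g)].

Definition maximal_subgroup (M : R -> Prop) : Prop :=
  [/\ is_subgroup M, ~ subset_pr units_set M &
      forall H, is_subgroup H -> subset_pr M H -> ~ subset_pr units_set H ->
        seteq_pr H M].

Definition max_abelian_normal (A M : R -> Prop) : Prop :=
  [/\ normal_sub A M, abelian_set A &
      forall B, normal_sub B M -> abelian_set B -> subset_pr A B -> seteq_pr B A].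

End DivRingGroups.

From mathcomp Require Import all_boot all_algebra.
From Stdlib Require Import Classical.
Set Implicit Arguments. Unset Strict Implicit. Unset Printing Implicit Defensive.
Import GRing.Theory.
Local Open Scope ring_scope.

(* Hua's identity: for b <> 0, -1 in a division ring,
   (b x b^-1 - (1 + b) x (1 + b)^-1) b = (1 + b) x (1 + b)^-1 - x, so b lies in every
   division subring containing x and its conjugates by b and 1 + b, unless b commutes
   with x.  This gives the Cartan-Brauer-Hua theorem, and with it: a division subring
   normalized by the maximal subgroup M is central, is all of D, or has its units in M;
   in the last case it is commutative because M' is abelian.  Applied to the centralizer
   of A this shows that M' commutes with A, so M'A is an abelian normal subgroup and
   M' <= A by maximality of A.  Hence N >= A >= M' is normal in M and F(N) is normalized
   by M; F(N) central or F(N)^* <= M would both force N <= A, so F(N) = D. *)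

Section Subgroups.
Variable R : unitRingType.
Implicit Types (G H K L S : R -> Prop) (x y g : R).

Definition normalizes G K := forall g x, G g -> K x -> K (g^-1 * x * g).

Definition nonzeros L : R -> Prop := fun x => L x /\ x != 0.

Definition prodset K H : R -> Prop :=
  fun z => exists x y, [/\ K x, H y & z = x * y].

Definition centralizer S : R -> Prop := fun x => forall a, S a -> x * a = a * x.

Lemma unitr_neq0 x : x \is a GRing.unit -> x != 0.
Proof. by apply: contraTneq => ->; rewrite unitr0. Qed.

Lemma conjgM g x y : g \is a GRing.unit ->
  (g^-1 * x * g) * (g^-1 * y * g) = g^-1 * (x * y) * g.
Proof. by move=> hg; rewrite !mulrA mulrK. Qed.

Lemma conjg_commutator x g : x \is a GRing.unit ->
  g^-1 * x * g = x * commutator x g.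
Proof. by move=> hx; rewrite /commutator !mulrA mulrV // mul1r. Qed.

Lemma mulrACA_comm x y z w : GRing.comm y z -> x * y * (z * w) = x * z * (y * w).
Proof. by move=> hyz; rewrite -!mulrA (mulrA y) hyz -mulrA. Qed.

Lemma subgroup_unit G x : is_subgroup G -> G x -> x \is a GRing.unit.
Proof. by case=> hG _ _ _ /hG. Qed.

Lemma subgroup_units : is_subgroup (@units_set R).
Proof.
split=> //; first exact: unitr1.
- by move=> x y hx hy; rewrite /units_set unitrMl.
- by move=> x hx; rewrite /units_set unitrV.
Qed.

Lemma subgroup_gen S : subset_pr S (@units_set R) -> is_subgroup (gen_subgroup S).
Proof.
move=> hS; split.
- by move=> x hx; apply: hx; [exact: subgroup_units | exact: hS].
- by move=> H [].
- by move=> x y hx hy H hH hSH; case: (hH) => _ _ hM _; apply: hM; [apply: hx | apply: hy].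
- by move=> x hx H hH hSH; case: (hH) => _ _ _ hV; apply: hV; apply: hx.
Qed.

Lemma derived_commutator G x y : G x -> G y -> derived G (commutator x y).
Proof. by move=> hx hy H _ hS; apply: hS; exists x, y. Qed.

Lemma derived_sub G : is_subgroup G -> subset_pr (derived G) G.
Proof.
move=> hG x; apply=> // _ [a [b [ha hb ->]]].
have [_ _ hM hV] := hG.
by rewrite /commutator; do 3!apply: (hM) => //; apply: hV.
Qed.

Lemma subgroup_derived G : is_subgroup G -> is_subgroup (derived G).
Proof.
move=> hG; apply: subgroup_gen => _ [a [b [ha hb ->]]].
by apply: (subgroup_unit hG); apply: derived_sub => //; apply: derived_commutator.
Qed.

Lemma normalizes_derived G : is_subgroup G -> normalizes G (derived G).
Proof.
move=> hG g d hg hd; have hGd := derived_sub hG hd.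
rewrite conjg_commutator; last exact: subgroup_unit hG hGd.
by case: (subgroup_derived hG) => _ _ hM _; apply: hM => //; apply: derived_commutator.
Qed.

Lemma normal_of_derived_sub G N : is_subgroup N -> subset_pr N G ->
  subset_pr (derived G) N -> normal_sub N G.
Proof.
move=> hN hNG hDN; split=> // g n hg hn.
rewrite conjg_commutator; last exact: subgroup_unit hN hn.
have [_ _ hM _] := hN.
by apply: hM => //; apply: (hDN); apply: derived_commutator => //; apply: (hNG).
Qed.

Lemma normal_prodset G K H : is_subgroup G -> normal_sub K G -> normal_sub H G ->
  (forall k h, K k -> H h -> GRing.comm k h) -> normal_sub (prodset K H) G.
Proof.
move=> hG [hK hKG hKn] [hH hHG hHn] hKH.
have [hKu hK1 hKM hKV] := hK; have [hHu hH1 hHM hHV] := hH.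
split; first split.
- move=> _ [k [h [hk hh ->]]]; rewrite /units_set unitrMl; [exact: hKu | exact: hHu].
- by exists 1, 1; rewrite mulr1.
- move=> _ _ [k [h [hk hh ->]]] [k' [h' [hk' hh' ->]]].
  exists (k * k'), (h * h'); split; [exact: hKM | exact: hHM |].
  by rewrite mulrACA_comm //; apply/commr_sym/hKH.
- move=> _ [k [h [hk hh ->]]]; exists k^-1, h^-1; split; [exact: hKV | exact: hHV |].
  by rewrite invrM ?(hKu k) ?(hHu h) //; apply/commrV/commr_sym/commrV; apply: hKH.
- have [_ _ hGM _] := hG.
  by move=> _ [k [h [hk hh ->]]]; apply: hGM; [apply: (hKG) | apply: (hHG)].
- move=> g _ hg [k [h [hk hh ->]]].
  exists (g^-1 * k * g), (g^-1 * h * g); split; [exact: hKn | exact: hHn |].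
  by rewrite conjgM //; apply: (subgroup_unit hG).
Qed.

Lemma abelian_prodset K H : abelian_set K -> abelian_set H ->
  (forall k h, K k -> H h -> GRing.comm k h) -> abelian_set (prodset K H).
Proof.
move=> hK hH hKH _ _ [k [h [hk hh ->]]] [k' [h' [hk' hh' ->]]].
rewrite mulrACA_comm; last exact/commr_sym/hKH.
rewrite [RHS]mulrACA_comm; last exact/commr_sym/hKH.
by rewrite (hK k k') // (hH h h').
Qed.

Lemma divsubring_gen_divsubring S : is_divsubring (divsubring_gen S).
Proof.
split.
- by move=> T [].
- by move=> T [].
- by move=> x y hx hy T hT hS; case: (hT) => _ _ hB _ _; apply: hB; [apply: hx | apply: hy].
- by move=> x y hx hy T hT hS; case: (hT) => _ _ _ hM _; apply: hM; [apply: hx | apply: hy].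
- by move=> x hx hx0 T hT hS; case: (hT) => _ _ _ _ hV; apply: hV => //; apply: hx.
Qed.

Lemma divsubring_gen_sub S : subset_pr S (divsubring_gen S).
Proof. by move=> x hx T _; apply. Qed.

Lemma divsubringD L x y : is_divsubring L -> L x -> L y -> L (x + y).
Proof.
case=> h0 _ hB _ _ hx hy; have hNy : L (- y) by rewrite -sub0r; apply: hB.
by rewrite -[y]opprK; apply: hB.
Qed.

Lemma divsubring_centralizer S : is_divsubring (centralizer S).
Proof.
split.
- by move=> a _; rewrite mul0r mulr0.
- by move=> a _; rewrite mul1r mulr1.
- by move=> x y hx hy a ha; rewrite mulrBl mulrBr hx // hy.
- by move=> x y hx hy a ha; rewrite -mulrA hy // mulrA hx // mulrA.
- by move=> x hx _ a ha; apply/commr_sym/commrV/commr_sym/hx.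
Qed.

Lemma normalizes_center G : subset_pr G (@units_set R) -> normalizes G (@center R).
Proof. by move=> hG g x hg hx; rewrite -mulrA hx mulrA mulVr ?mul1r //; apply: hG. Qed.

Lemma normalizes_centralizer G S : is_subgroup G -> normalizes G S ->
  normalizes G (centralizer S).
Proof.
move=> hG hS g x hg hx a ha; have hgu := subgroup_unit hG hg.
have [_ _ _ hV] := hG; have hSa := hS _ _ (hV _ hg) ha; rewrite invrK in hSa.
have -> : a = g^-1 * (g * a * g^-1) * g by rewrite !mulrA mulVr // mul1r mulrVK.
by rewrite !conjgM // hx.
Qed.

End Subgroups.

Section DivisionRing.
Variable R : unitRingType.
Hypothesis hdiv : is_divring R.
Implicit Types (G K L S : R -> Prop) (x y b g : R).

Lemma normalizes_divsubring_gen G S : subset_pr G (@units_set R) ->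
  normalizes G S -> normalizes G (divsubring_gen S).
Proof.
move=> hG hS g x hg hx; have hgu : g \is a GRing.unit by apply: hG.
apply: (hx (fun x => divsubring_gen S (g^-1 * x * g))); last first.
  by move=> y hy; apply: divsubring_gen_sub; apply: hS.
have [h0 h1 hB hM hV] := divsubring_gen_divsubring S.
split.
- by rewrite mulr0 mul0r.
- by rewrite mulr1 mulVr.
- by move=> y z hy hz; rewrite mulrBr mulrBl; apply: hB.
- by move=> y z hy hz; rewrite -conjgM //; apply: hM.
- move=> y hy hy0; have hyu := hdiv hy0.
  have -> : g^-1 * y^-1 * g = (g^-1 * y * g)^-1.
    by rewrite !invrM ?unitrMl ?unitrV // invrK mulrA.
  by apply: hV => //; apply: unitr_neq0; rewrite !unitrMl ?unitrV.
Qed.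

Lemma subgroup_nonzeros L : is_divsubring L -> is_subgroup (nonzeros L).
Proof.
case=> _ h1 _ hM hV; split.
- by move=> x [_ /hdiv].
- by split; [exact: h1 | exact: oner_neq0].
- move=> x y [hx hx0] [hy hy0]; split; first exact: hM.
  by apply: unitr_neq0; rewrite unitrMl; apply: hdiv.
- move=> x [hx hx0]; split; first exact: hV.
  by apply: unitr_neq0; rewrite unitrV; apply: hdiv.
Qed.

Lemma divsubring_hua S x b : is_divsubring S -> S x ->
  S (b * x * b^-1) -> S ((1 + b) * x * (1 + b)^-1) -> S b \/ GRing.comm x b.
Proof.
move=> hS hx hu hv; have [h0 h1 hB hM hV] := hS.
have [-> | b0] := eqVneq b 0; first by left.
have [e | b1] := eqVneq (1 + b) 0.
  left; have -> : b = 0 - 1 by rewrite -e [1 + b]addrC addrK.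
  exact: hB.
set u := b * x * b^-1 in hu; set v := (1 + b) * x * (1 + b)^-1 in hv.
have ub : u * b = b * x by rewrite mulrVK ?hdiv.
have vb : v * (1 + b) = (1 + b) * x by rewrite mulrVK ?hdiv.
have e : (u - v) * b = v - x.
  move: vb; rewrite mulrDr mulr1 mulrDl mul1r -ub => evb.
  rewrite mulrBl; have -> : u * b = v + v * b - x by rewrite evb addrC addKr.
  by rewrite addrAC addrK.
have [euv | nuv] := eqVneq u v.
- right; move: e; rewrite euv subrr mul0r => /esym/subr0_eq evx.
  by rewrite /GRing.comm -ub euv evx.
- have nuv0 : u - v != 0 by rewrite subr_eq0.
  left; have -> : b = (u - v)^-1 * (v - x) by rewrite -e mulKr ?hdiv.
  by apply: hM; [apply: hV => //; apply: hB | apply: hB].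
Qed.

Lemma commr_hua x b : GRing.comm x (b * x * b^-1) ->
  GRing.comm x ((1 + b) * x * (1 + b)^-1) -> GRing.comm x b.
Proof.
move=> hu hv; pose S := centralizer (fun a => a = x).
have hS y : GRing.comm x y -> S y by move=> hxy _ ->; apply/commr_sym.
have [/(_ x erefl) | //] := divsubring_hua (divsubring_centralizer _) (hS x (commr_refl x))
  (hS _ hu) (hS _ hv).
exact: commr_sym.
Qed.

Theorem cartan_brauer_hua L : is_divsubring L -> normalizes (@units_set R) L ->
  subset_pr L (@center R) \/ forall x, L x.
Proof.
move=> hL hLn; have [h0 h1 hB _ _] := hL.
have [|] := classic (forall x, L x); [by right | move/not_all_ex_not=> [b hb]; left].
have hconj y a : y != 0 -> L a -> L (y * a * y^-1).
  move=> y0 ha; have := hLn y^-1 a; rewrite invrK; apply=> //.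
  by rewrite /units_set unitrV hdiv.
have comm_out a c : L a -> ~ L c -> GRing.comm a c.
  move=> ha hc; have c0 : c != 0 by apply: contra_not_neq hc => ->.
  have c1 : 1 + c != 0.
    apply: contra_not_neq hc => e; have -> : c = 0 - 1 by rewrite -e [1 + c]addrC addrK.
    exact: hB.
  by have [//|] := divsubring_hua hL ha (hconj _ _ c0 ha) (hconj _ _ c1 ha).
move=> a ha z; have [hz | hz] := classic (L z); last exact: comm_out.
have hbz : ~ L (b + z) by move=> h; apply: hb; rewrite -(addrK z b); apply: hB.
have := comm_out _ _ ha hbz; rewrite /GRing.comm mulrDr mulrDl (comm_out _ _ ha hb).
exact: addrI.
Qed.

Lemma subgroup_prodset_nonzeros G L : is_subgroup G -> is_divsubring L ->
  normalizes G L -> is_subgroup (prodset (nonzeros L) G).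
Proof.
move=> hG hL hLn; have [hGu hG1 hGM hGV] := hG; have [_ _ _ _ hV] := hL.
have [hLu hL1 hLM hLV] := subgroup_nonzeros hL.
split.
- by move=> _ [l [g [hl hg ->]]]; rewrite /units_set unitrMl; [exact: hLu | exact: hGu].
- by exists 1, 1; rewrite mulr1.
- move=> _ _ [l [g [hl hg ->]]] [l' [g' [hl' hg' ->]]].
  have hgu : g \is a GRing.unit by apply: hGu.
  exists (l * (g * l' * g^-1)), (g * g'); split; last by rewrite !mulrA mulrVK.
  + apply: hLM => //; case: hl' => hl' hl'0; split.
      by have := hLn g^-1 l'; rewrite invrK; apply=> //; apply: hGV.
    by apply: unitr_neq0; rewrite !unitrMl ?unitrV //; apply: hdiv.
  + exact: hGM.
- move=> _ [l [g [[hl hl0] hg ->]]].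
  have hgu : g \is a GRing.unit by apply: hGu.
  exists (g^-1 * l^-1 * g), g^-1; split; last by rewrite mulrK // invrM // hdiv.
  + split; first by apply: hLn => //; apply: hV.
    by apply: unitr_neq0; rewrite !unitrMl ?unitrV //; apply: hdiv.
  + exact: hGV.
Qed.

Lemma divsubring_normalized_by_maximal G L : maximal_subgroup G ->
  is_divsubring L -> normalizes G L ->
  [\/ subset_pr (nonzeros L) G, subset_pr L (@center R) | forall x, L x].
Proof.
move=> [hG _ hGmax] hL hLn; have [hGu hG1 _ _] := hG; have [_ h1 _ hM hV] := hL.
pose H := prodset (nonzeros L) G.
have hGH : subset_pr G H.
  by move=> g hg; exists 1, g; rewrite mul1r; split=> //; split; [exact: h1 | exact: oner_neq0].
have [hUH | hUH] := classic (subset_pr (@units_set R) H).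
  suff /(cartan_brauer_hua hL) [] : normalizes (@units_set R) L by [apply: Or32 | apply: Or33].
  move=> y x /hUH [l [g [[hl hl0] hg ->]]] hx; have hlu := hdiv hl0.
  have hgu : g \is a GRing.unit by apply: hGu.
  have -> : (l * g)^-1 * x * (l * g) = g^-1 * (l^-1 * x * l) * g.
    by rewrite invrM // !mulrA.
  by apply: hLn => //; do 2!apply: (hM) => //; apply: hV.
apply: Or31 => x hx; have := hGmax H (subgroup_prodset_nonzeros hG hL hLn) hGH hUH x.
by case=> + _; apply; exists x, 1; rewrite mulr1.
Qed.

Lemma divsubring_comm_abelian_normalized G K L : is_subgroup G ->
  abelian_set K -> normalizes G K -> is_divsubring L -> subset_pr (nonzeros L) G ->
  forall k b, K k -> L b -> GRing.comm k b.
Proof.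
move=> hG hK hKn hL hLG k b hk hb; have [_ h1 _ _ _] := hL; have [_ _ _ hGV] := hG.
have conjK g : L g -> GRing.comm k (g * k * g^-1).
  have [-> _ | g0] := eqVneq g 0; first by rewrite !mul0r; exact: commr0.
  move=> hg; apply: hK => //; have := hKn g^-1 k; rewrite invrK; apply=> //.
  by apply: hGV; apply: hLG.
by apply: commr_hua; apply: conjK => //; apply: divsubringD.
Qed.

Lemma divsubring_abelian_of_metabelian G L : is_subgroup G -> metabelian G ->
  is_divsubring L -> subset_pr (nonzeros L) G -> abelian_set L.
Proof.
move=> hG hGmet hL hLG x y hx hy; have [_ _ _ hGV] := hG.
have [-> | y0] := eqVneq y 0; first by rewrite mulr0 mul0r.
have hyu : y \is a GRing.unit by apply: hdiv.
have conj_y g : L g -> GRing.comm y (g * y * g^-1).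
  have [-> _ | g0 hg] := eqVneq g 0; first by rewrite !mul0r; exact: commr0.
  rewrite -{1}[g]invrK conjg_commutator //; apply: commrM; first exact: commr_refl.
  apply/commr_sym; apply: (divsubring_comm_abelian_normalized hG hGmet _ hL hLG) => //.
    exact: normalizes_derived.
  by apply: derived_commutator; [apply: hLG | apply: hGV; apply: hLG].
have [_ h1 _ _ _] := hL.
by apply/commr_sym/commr_hua; apply: conj_y => //; apply: divsubringD.
Qed.

Lemma nonzeros_sub_max_abelian_normal G A L : is_subgroup G -> metabelian G ->
  max_abelian_normal A G -> is_divsubring L -> normalizes G L ->
  subset_pr (nonzeros L) G -> subset_pr A L -> subset_pr (nonzeros L) A.
Proof.
move=> hG hGmet [[hA _ _] _ hAmax] hL hLn hLG hAL.
have hLnormal : normal_sub (nonzeros L) G.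
  split=> [|//|g x hg [hx hx0]]; first exact: subgroup_nonzeros.
  split; first exact: hLn.
  have hgu := subgroup_unit hG hg.
  by apply: unitr_neq0; rewrite unitrMl // unitrMr ?unitrV // hdiv.
have hLab : abelian_set (nonzeros L).
  by move=> x y [hx _] [hy _]; apply: (divsubring_abelian_of_metabelian hG hGmet hL hLG).
have hAL' : subset_pr A (nonzeros L).
  by move=> a ha; split; [exact: hAL | apply: unitr_neq0; exact: subgroup_unit hA ha].
by move=> x hx; have [+ _] := hAmax _ hLnormal hLab hAL' x; apply.
Qed.

Lemma derived_comm_max_abelian_normal G A : maximal_subgroup G -> metabelian G ->
  max_abelian_normal A G -> forall d a, derived G d -> A a -> GRing.comm d a.
Proof.
move=> hGmax hGmet [[_ _ hAn] hAab _] d a hd ha; have [hG _ _] := hGmax.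
have hAC : centralizer A a by move=> a' ha'; apply: hAab.
have hCn : normalizes G (centralizer A) by apply: normalizes_centralizer.
have [hCG | hCc | hCall] :=
  divsubring_normalized_by_maximal hGmax (divsubring_centralizer A) hCn.
- exact: (divsubring_comm_abelian_normalized hG hGmet (normalizes_derived hG)
    (divsubring_centralizer A) hCG).
- by apply/commr_sym; apply: hCc.
- exact: hCall.
Qed.

Lemma derived_sub_max_abelian_normal G A : maximal_subgroup G -> metabelian G ->
  max_abelian_normal A G -> subset_pr (derived G) A.
Proof.
move=> hGmax hGmet hA; have [hG _ _] := hGmax; have [hAnormal hAab hAmax] := hA.
have hDA := derived_comm_max_abelian_normal hGmax hGmet hA.
have hDnormal : normal_sub (derived G) G.
  by split; [exact: subgroup_derived | exact: derived_sub | exact: normalizes_derived].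
have hDAnormal := normal_prodset hG hDnormal hAnormal hDA.
have hDAab := abelian_prodset hGmet hAab hDA.
have hADA : subset_pr A (prodset (derived G) A).
  by move=> a ha; exists 1, a; rewrite mul1r; split=> //; case: (subgroup_derived hG).
move=> d hd; have [+ _] := hAmax _ hDAnormal hDAab hADA d; apply.
by exists d, 1; rewrite mulr1; split=> //; case: hAnormal => -[].
Qed.

End DivisionRing.

Theorem proposition2p7 (R : unitRingType) (hdiv : is_divring R)
  (hnc : exists x y : R, x * y != y * x)
  (M A N : R -> Prop)
  (hMmax : maximal_subgroup M) (hMirr : irreducible M)
  (hMmet : metabelian M) (hMls : locally_solvable M)
  (hA : max_abelian_normal A M)
  (hN : is_subgroup N) (hNM : subset_pr N M)
  (hAN : subset_pr A N) (hNA : ~ subset_pr N A) :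
  irreducible N.
Proof.
have [hM _ _] := hMmax; have [_ _ hAmax] := hA.
have hDA := derived_sub_max_abelian_normal hdiv hMmax hMmet hA.
have hNnormal : normal_sub N M.
  by apply: normal_of_derived_sub => // d hd; apply: hAN; apply: hDA.
pose S y := center y \/ N y; pose L := divsubring_gen S.
have hL : is_divsubring L := divsubring_gen_divsubring S.
have hNL : subset_pr N L by move=> n hn; apply: divsubring_gen_sub; right.
have hLn : normalizes M L.
  have hMu : subset_pr M (@units_set R) by move=> m; apply: subgroup_unit hM.
  apply: normalizes_divsubring_gen => // m y hm [hy | hy].
    by left; exact: normalizes_center hMu _ _ hm hy.
  by right; case: hNnormal => _ _; apply.
have [hLM | hLc | //] := divsubring_normalized_by_maximal hdiv hMmax hL hLn.
- case: hNA => n hn.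
  apply: (nonzeros_sub_max_abelian_normal hdiv hM hMmet hA hL hLn hLM).
    by move=> a ha; apply: hNL; apply: hAN.
  by split; [apply: hNL | apply: unitr_neq0; apply: subgroup_unit hN hn].
- case: hNA => n hn.
  have hNab : abelian_set N by move=> x y hx hy; apply: (hLc x); apply: hNL.
  by have [+ _] := hAmax N hNnormal hNab hAN n; apply.
Qed.
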